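(* Let $S$ be a nonempty set of graphs on $\Pi$. Then $\mathrm{eqdom}(S)$-set agreement is solvable in one round on the closed-above model generated by $\mathrm{Sym}(S)$.
   Context: Fix a set of $n$ processes $\Pi=\{p_1,\dots,p_n\}$. A graph is a directed graph with vertex set $\Pi$; every graph is assumed to contain all self-loops $(p,p)$. For a graph $G$ and $p\in\Pi$, $Out_G(p)=\{q:(p,q)\in E(G)\}$ and $In_G(p)=\{q:(q,p)\in E(G)\}$; for $P\subseteq\Pi$, $Out_G(P)=\bigcup_{p\in P}Out_G(p)$. Computation proceeds in failure-free, communication-closed rounds: in each round $r$ a graph $G_r$ is chosen and each process $p$ receives in round $r$ exactly the round-$r$ messages of the processes in $In_{G_r}(p)$. A communication model is a set of infinite sequences of graphs; an execution is allowed iff its sequence of round graphs belongs to the model. For a graph $G$, $\uparrow G=\{H: E(H)\supseteq E(G)\}$. The closed-above model generated by a set $S$ of graphs is $(\bigcup_{G\in S}\uparrow G)^\omega$. For a set $S$ of graphs, $\mathrm{Sym}(S)=\{\pi(G): G\in S,\ \pi:\Pi\to\Pi \text{ a permutation}\}$, where $\pi(G)$ has edges $\{(\pi(u),\pi(v)):(u,v)\in E(G)\}$. In $k$-set agreement each process starts with an input from a totally ordered set $V_{in}$ and must decide a value so that every decided value is the input of some process and at most $k$ distinct values are decided; it is solvable in $r$ rounds on a model if some algorithm guarantees this, with all processes deciding after $r$ rounds, in every allowed execution and for every input assignment. For a graph $G$, $\mathrm{eqdom}(G)=\min\{i\in[1,n]: \forall P\subseteq\Pi,\ |P|=i\Rightarrow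 Out_G(P)=\Pi\}$, and $\mathrm{eqdom}(S)=\max_{G\in S}\mathrm{eqdom}(G)$. *)

From HB Require Import structures.
From mathcomp Require Import all_boot all_order all_fingroup.
Set Implicit Arguments. Unset Strict Implicit. Unset Printing Implicit Defensive.

(* Processes Pi = 'I_n; a graph is a set of directed edges (p,q). *)
Definition graph (n : nat) := {set 'I_n * 'I_n}.

Definition is_graph n (G : graph n) : bool := [forall p, (p, p) \in G].

Definition Out n (G : graph n) (P : {set 'I_n}) : {set 'I_n} :=
  [set q | [exists p in P, (p, q) \in G]].

Definition In n (G : graph n) (p : 'I_n) : {set 'I_n} :=
  [set q | (q, p) \in G].

Definition perm_graph n (s : {perm 'I_n}) (G : graph n) : graph n :=
  [set (s e.1, s e.2) | e in G].

Definition SymG n (S : {set graph n}) : {set graph n} :=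
  [set perm_graph s G | s in [set: {perm 'I_n}], G in S].

(* the closed-above model generated by S: sequences of round graphs
   (index r : nat is round r+1) each containing some graph of S *)
Definition closed_above_model n (S : {set graph n}) : (nat -> graph n) -> Prop :=
  fun gs => forall r, exists2 G, G \in S & G \subset gs r.

Definition dominates_at n (G : graph n) (i : nat) : bool :=
  [forall P : {set 'I_n}, (#|P| == i) ==> (Out G P == [set: 'I_n])].

Definition eqdomG n (G : graph n) : nat :=
  \big[minn/n]_(1 <= i < n.+1 | dominates_at G i) i.

Definition eqdom n (S : {set graph n}) : nat := \max_(G in S) eqdomG G.

(* A one-round algorithm: each process p sends the message send p (x p),
   receives the round-1 messages of the processes in In_{G_1}(p), and
   decides dec p (x p) rcv, where rcv q = Some msg iff q is an in-neighbour. *)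
Definition one_round_decision n (V Msg : Type) (send : 'I_n -> V -> Msg)
  (dec : 'I_n -> V -> ('I_n -> option Msg) -> V) (G1 : graph n) (x : 'I_n -> V)
  (p : 'I_n) : V :=
  dec p (x p) (fun q => if q \in In G1 p then Some (send q (x q)) else None).

Definition set_agreement_solvable_one_round n (V : eqType) (k : nat)
  (M : (nat -> graph n) -> Prop) : Prop :=
  exists (Msg : Type) (send : 'I_n -> V -> Msg)
         (dec : 'I_n -> V -> ('I_n -> option Msg) -> V),
    forall gs : nat -> graph n, M gs -> forall x : 'I_n -> V,
      (forall p, exists q, one_round_decision send dec (gs 0) x p = x q) /\
      size (undup [seq one_round_decision send dec (gs 0) x p | p <- enum 'I_n]) <= k.

From HB Require Import structures.
From mathcomp Require Import all_boot all_order all_fingroup.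
Set Implicit Arguments. Unset Strict Implicit. Unset Printing Implicit Defensive.
Import Order.TTheory.

(* Every process decides the minimum input it hears of.  In round 1 the graph
   contains pi(H) for some H in S; pi preserves domination, so with
   m = eqdom(H) <= eqdom(S) every set of m processes reaches everybody.  In
   particular every process hears from one of the m processes L holding the
   smallest inputs; its decision is then at most some input of L, and being an
   input it is an input of L.  Hence at most m values are decided. *)

Section Domination.
Variable n : nat.
Implicit Types (G H : graph n) (P : {set 'I_n}).

Lemma eqdomG_le G : eqdomG G <= n.
Proof.
by apply: (big_rec (fun v => v <= n)) => // i v _; apply: leq_trans (geq_minr _ _).
Qed.

Lemma dominates_at_eqdomG G : is_graph G -> dominates_at G (eqdomG G).
Proof.
move=> loopG; apply: (big_rec (dominates_at G)) => [|i v domi domv].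
  rewrite /dominates_at; apply/forallP => P; apply/implyP => /eqP cardP.
  have -> : P = [set: 'I_n].
    by apply/eqP; rewrite eqEcard subsetT cardsT card_ord cardP leqnn.
  apply/eqP/setP => q; rewrite !inE; apply/existsP; exists q.
  by rewrite in_setT (forallP loopG q).
by rewrite /minn; case: ltnP.
Qed.

Lemma dominates_at_In G P p :
  dominates_at G #|P| -> exists2 q, q \in P & q \in In G p.
Proof.
move=> /forallP /(_ P) /implyP /(_ (eqxx _)) /eqP domP.
have := in_setT p; rewrite -domP inE => /existsP [q /andP [qP qp]].
by exists q; rewrite // inE.
Qed.

Lemma dominates_at_subset G H m :
  G \subset H -> dominates_at G m -> dominates_at H m.
Proof.
move=> sGH /forallP domG; rewrite /dominates_at; apply/forallP => P; apply/implyP => cardP.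
rewrite eqEsubset subsetT /=; apply/subsetP => q _.
have := in_setT q; move: (implyP (domG P) cardP) => /eqP <-.
rewrite !inE => /existsP [p /andP [pP pq]].
by apply/existsP; exists p; rewrite pP (subsetP sGH).
Qed.

Lemma dominates_at_perm_graph (s : {perm 'I_n}) G m :
  dominates_at G m -> dominates_at (perm_graph s G) m.
Proof.
move=> /forallP domG; rewrite /dominates_at; apply/forallP => P; apply/implyP => /eqP cardP.
have cardP' : #|(s^-1)%g @: P| == m by rewrite card_imset ?cardP //; apply: perm_inj.
apply/eqP/setP => q; rewrite !inE.
have := in_setT ((s^-1)%g q); move: (implyP (domG _) cardP') => /eqP <-.
rewrite inE => /existsP [_ /andP [/imsetP [p pP ->] pq]].
apply/existsP; exists p; rewrite pP; apply/imsetP.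
by exists ((s^-1)%g p, (s^-1)%g q); rewrite //= !permKV.
Qed.

Lemma closed_above_SymG_dominates (S : {set graph n}) gs r :
  (forall G, G \in S -> is_graph G) -> closed_above_model (SymG S) gs ->
  exists m, [/\ m <= n, m <= eqdom S & dominates_at (gs r) m].
Proof.
move=> loopS /(_ r) [_ /imset2P [s H _ HS ->] sHgs].
exists (eqdomG H); split; first exact: eqdomG_le.
  exact: (leq_bigmax_cond _ HS).
apply: dominates_at_subset sHgs _.
exact/dominates_at_perm_graph/dominates_at_eqdomG/loopS.
Qed.

End Domination.

Section MinimumRule.
Variables (d : Order.disp_t) (V : orderType d).

Definition lower_set (T : finType) (x : T -> V) (L : {set T}) :=
  forall q r, q \in L -> r \notin L -> (x q <= x r)%O.

Lemma exists_lower_set (T : finType) (x : T -> V) m :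
  m <= #|T| -> exists2 L : {set T}, #|L| = m & lower_set x L.
Proof.
move=> le_m; set srt := sort (fun p q => x p <= x q)%O (enum T).
have sorted_srt : pairwise (fun p q => x p <= x q)%O srt.
  rewrite -sorted_pairwise; last by move=> ???; apply: le_trans.
  by apply: sort_sorted => ??; apply: le_total.
exists [set q in take m srt].
  have uniq_take : uniq (take m srt) by rewrite take_uniq // sort_uniq enum_uniq.
  rewrite cardsE; move/card_uniqP: uniq_take ->.
  by rewrite size_takel // size_sort -cardE.
move=> q r; rewrite !inE => qL rL.
have r_drop : r \in drop m srt.
  have : r \in srt by rewrite mem_sort mem_enum.
  by rewrite -{1}(cat_take_drop m srt) mem_cat (negbTE rL).
move: sorted_srt; rewrite -(cat_take_drop m srt) pairwise_cat => /and3P [+ _ _].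
by move/allrelP; apply.
Qed.

Lemma bigmin_codom (I T : finType) (P : pred I) (x : T -> V) (F : I -> T) t :
  exists c, \big[Order.min/x t]_(i | P i) x (F i) = x c.
Proof.
apply: (big_ind (fun w => exists c, w = x c)); first by exists t.
  by move=> _ _ [a ->] [b ->]; rewrite minEle; case: ifP; [exists a | exists b].
by move=> i _; exists (F i).
Qed.

(* If v = x c with c outside L, then also x q <= v, so v = x q. *)
Lemma mem_image_lower_set (T : finType) (x : T -> V) L v q :
  lower_set x L -> q \in L -> (v <= x q)%O -> (exists c, v = x c) ->
  v \in [seq x p | p in L].
Proof.
move=> lowL qL vq [c vc]; subst v.
have [cL | cNL] := boolP (c \in L); first exact: image_f.
by rewrite (@le_anti _ _ (x c) (x q)) ?image_f // vq lowL.
Qed.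

Definition min_heard (T : finType) (v : V) (rcv : T -> option V) : V :=
  \big[Order.min/v]_(q : T) odflt v (rcv q).

Lemma min_heard_decision n (G : graph n) (x : 'I_n -> V) p :
  one_round_decision (fun _ v => v) (fun _ => @min_heard 'I_n) G x p =
  \big[Order.min/x p]_(q in In G p) x q.
Proof.
rewrite /one_round_decision /min_heard [RHS]bigmin_mkcond.
by apply: eq_bigr => q _; case: ifP.
Qed.

End MinimumRule.

Theorem mainTheorem3 (n : nat) (d : Order.disp_t) (V : orderType d)
  (S : {set graph n}) :
  S != set0 ->
  (forall G, G \in S -> is_graph G) ->
  set_agreement_solvable_one_round V (eqdom S) (closed_above_model (SymG S)).
Proof.
move=> _ loopS; exists V, (fun _ v => v), (fun _ => @min_heard _ V 'I_n).
move=> gs model_gs x; split=> [p|].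
  by rewrite min_heard_decision; apply: (bigmin_codom _ x id).
have [m [le_mn le_m_eqdom dom_m]] := closed_above_SymG_dominates 0 loopS model_gs.
have [L cardL lowL] : exists2 L : {set 'I_n}, #|L| = m & lower_set x L.
  by apply: exists_lower_set; rewrite card_ord.
rewrite -cardL in dom_m.
apply: leq_trans le_m_eqdom; rewrite -cardL -(size_image x L).
apply: uniq_leq_size; first exact: undup_uniq.
move=> v; rewrite mem_undup => /mapP [p _ ->]; rewrite min_heard_decision.
have [q qL qp] := dominates_at_In p dom_m.
apply: mem_image_lower_set lowL qL _ (bigmin_codom _ x id _).
exact: bigmin_le_cond.
Qed.
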